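(* Let $\mathbf m\in\mathbb C^d$ with $\operatorname{supp}(\widehat{\mathbf m})\subseteq[\rho]_0$, where $\rho<d/2$, so that $\widehat{\mathbf m}=(a_0e^{i\theta_0},\dots,a_{\rho-1}e^{i\theta_{\rho-1}},0,\dots,0)^T$ with $a_j,\theta_j\in\mathbb R$. Let $2\le\kappa\le\rho$ and $$\mu_1=\min_{|p|\le\kappa-1,\ q\in[d]_0}\left|\left(F_d(\widehat{\mathbf m}\circ S_p\overline{\widehat{\mathbf m}})\right)_q\right|.$$ If $|a_0|>(\rho-1)|a_1|$ and $|a_1|\ge|a_2|\ge\cdots\ge|a_{\rho-1}|>0$, then $\mu_1>0$.
   Context: Vectors in $\mathbb C^d$ are indexed by $[d]_0=\{0,1,\dots,d-1\}$, with all indices interpreted modulo $d$. $F_d$ is the DFT matrix $(F_d)_{j,k}=e^{-2\pi i jk/d}$ and $\widehat{\mathbf m}=F_d\mathbf m$. The shift is $(S_p\mathbf x)_n=x_{n+p}$; $\circ$ is the entrywise product and $\overline{\mathbf x}$ the entrywise conjugate; $\operatorname{supp}(\mathbf x)=\{n:x_n\neq0\}$. *)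

(* Complex numbers are modelled by an arbitrary
   numClosedFieldType C (e.g. algC). *)
From HB Require Import structures.
From mathcomp Require Import all_boot all_order all_algebra.
Set Implicit Arguments. Unset Strict Implicit. Unset Printing Implicit Defensive.
Import Order.TTheory GRing.Theory Num.Theory.
Local Open Scope ring_scope.

(* Vectors in C^d are functions 'I_d -> C; indices are taken modulo d. *)

Lemma ord_dpos (d : nat) (n : 'I_d) : (0 < d)%N.
Proof. exact: leq_ltn_trans (leq0n n) (ltn_ord n). Qed.

Definition idx_add (d : nat) (n : 'I_d) (p : int) : 'I_d :=
  Ordinal (ltn_pmod (n + absz (p %% (d : int))%Z) (ord_dpos n)).

(* DFT matrix F_d applied to x, with w playing the role of e^{-2 pi i / d}:
   (F_d x)_j = sum_k w^(j k) x_k *)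
Definition dft (C : numClosedFieldType) (d : nat) (w : C) (x : 'I_d -> C)
  : 'I_d -> C := fun j => \sum_(k < d) w ^+ (j * k) * x k.

Definition shift (C : numClosedFieldType) (d : nat) (p : int) (x : 'I_d -> C)
  : 'I_d -> C := fun n => x (idx_add n p).

Definition hadamard (C : numClosedFieldType) (d : nat) (x y : 'I_d -> C)
  : 'I_d -> C := fun n => x n * y n.
Definition vconj (C : numClosedFieldType) (d : nat) (x : 'I_d -> C)
  : 'I_d -> C := fun n => (x n)^*.

From HB Require Import structures.
From mathcomp Require Import all_boot all_order all_algebra zify.
Set Implicit Arguments. Unset Strict Implicit. Unset Printing Implicit Defensive.
Import Order.TTheory GRing.Theory Num.Theory.
Local Open Scope ring_scope.

(* Write x := F_d m and b_n := |a_n| for n < rho, b_n := 0 otherwise, so that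
   |x_k| = b_k.  The q-th entry of F_d (x o S_p conj x) is the sum over k of
   w^(qk) x_k conj(x_(k+p)), whose k-th term has modulus b_k * b_(k+p mod d).
   The proof exhibits one dominant term:
   - for p = s >= 0 the term k = 0, of modulus b_0 b_s, while the other
     rho - 1 nonzero terms are at most b_1 b_s;
   - for p = -(n+1) the term k = n+1, of modulus b_(n+1) b_0, while the
     other nonzero terms are at most b_(n+1) b_1 (the terms with k < n+1
     wrap around to indices >= d - rho >= rho and vanish).
   In both cases the hypothesis b_0 > (rho-1) b_1 makes the dominant term
   larger than the sum of all the others, so the sum is nonzero. *)

Lemma norm_sum_gt0_dominant (R : numDomainType) (I : finType)
    (f B : I -> R) (i0 : I) :
  (forall i, i != i0 -> `|f i| <= B i) ->
  \sum_(i | i != i0) B i < `|f i0| -> 0 < `|\sum_i f i|.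
Proof.
move=> hB hlt; rewrite (bigD1 i0) //=.
set S := \sum_(i | i != i0) f i.
have hS : `|S| < `|f i0|.
  apply: le_lt_trans hlt; apply: le_trans (ler_norm_sum _ _ _) _.
  exact: ler_sum.
have htri : `|f i0| <= `|f i0 + S| + `|S|.
  by rewrite -[X in `|X| <= _](addrK S) (le_trans (ler_normD _ _)) ?normrN.
by rewrite -subr_gt0 in hS; apply: lt_le_trans hS _; rewrite lerBlDr.
Qed.

Lemma sum_ord_lt_const (R : pzRingType) (d rho : nat) (K : R) (k0 : 'I_d) :
  (rho <= d)%N -> (k0 < rho)%N ->
  \sum_(k | k != k0) (if (k < rho)%N then K else 0) = (rho.-1)%:R * K.
Proof.
move=> hd hk0.
have total : \sum_(k < d) (if (k < rho)%N then K else 0) = rho%:R * K.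
  rewrite -(big_mkord xpredT (fun k => if (k < rho)%N then K else 0)).
  rewrite (big_cat_nat (n:=rho)) //= [X in _ + X]big1_seq ?addr0; last first.
    by move=> i /andP[_]; rewrite mem_index_iota => /andP[hi _]; rewrite ltnNge hi.
  rewrite (eq_big_nat _ _ (F2 := fun _ => K)); last by move=> i /andP[_ ->].
  by rewrite sumr_const_nat subn0 mulr_natl.
move: total; rewrite (bigD1 k0) //= hk0; case: rho hk0 {hd} => // r _ /= total.
by apply: (addrI K); rewrite total -natr1 mulrDl mul1r addrC.
Qed.

Lemma sum_gt0_dominant_support (R : numDomainType) (d rho : nat)
    (f : 'I_d -> R) (K : R) (k0 : 'I_d) :
  (rho <= d)%N -> (k0 < rho)%N ->
  (forall k : 'I_d, (rho <= k)%N -> `|f k| = 0) ->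
  (forall k : 'I_d, k != k0 -> (k < rho)%N -> `|f k| <= K) ->
  (rho.-1)%:R * K < `|f k0| -> 0 < `|\sum_k f k|.
Proof.
move=> hd hk0 hvan hbnd hdom.
apply: (@norm_sum_gt0_dominant _ _ f
  (fun k : 'I_d => if (k < rho)%N then K else 0) k0).
  move=> k hk; case: ltnP => hkr; first exact: hbnd.
  by rewrite hvan.
by rewrite sum_ord_lt_const.
Qed.

Lemma prim_root_norm1 (R : numDomainType) (d : nat) (w : R) :
  (0 < d)%N -> d.-primitive_root w -> `|w| = 1.
Proof.
move=> d_gt0 hw; apply/eqP; rewrite -(pexpr_eq1 d_gt0 (normr_ge0 w)).
by rewrite -normrX prim_expr_order // normr1.
Qed.

Lemma idx_add_Posz (d : nat) (k : 'I_d) (s : nat) :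
  (k + s < d)%N -> nat_of_ord (idx_add k (Posz s)) = (k + s)%N.
Proof. by move=> h; rewrite /= modz_nat !modn_small //; lia. Qed.

Lemma idx_add_Negz (d : nat) (k : 'I_d) (n : nat) : (n < d)%N ->
  nat_of_ord (idx_add k (Negz n)) =
    if (n < k)%N then (k - n.+1)%N else (k + (d - n.+1))%N.
Proof.
move=> hn; have hk := ltn_ord k; rewrite /= modNz_nat; last by lia.
rewrite (modn_small hn) (_ : absz _ = (d - n.+1)%N); last by lia.
case: ltnP => hnk.
  by rewrite (_ : (k + _ = (k - n.+1) + d)%N) ?modnDr ?modn_small //; lia.
by rewrite modn_small //; lia.
Qed.

Section Magnitudes.

Variables (R : numDomainType) (rho : nat) (a : nat -> R).

Definition magn (n : nat) : R := if (n < rho)%N then `|a n| else 0.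

Lemma magn_ge0 n : 0 <= magn n.
Proof. by rewrite /magn; case: ifP. Qed.

Lemma magn_supp n : (rho <= n)%N -> magn n = 0.
Proof. by rewrite /magn ltnNge => ->. Qed.

Lemma magn_mono :
  (forall j, (1 <= j)%N -> (j.+1 < rho)%N -> `|a j.+1| <= `|a j|) ->
  forall i j, (1 <= i)%N -> (i <= j)%N -> magn j <= magn i.
Proof.
move=> a_dec i j hi hij; rewrite /magn; case: (ltnP j rho) => hj; last by case: ifP.
rewrite (leq_ltn_trans hij hj) /=.
elim: j hij hj => [|j IH] hij hj; first by lia.
case: (ltngtP i j.+1) hij => // [hlt _|-> _] //.
by apply: le_trans (a_dec _ _ hj) (IH _ _); lia.
Qed.

Lemma magn_dom : (1 < rho)%N -> (rho.-1)%:R * `|a 1%N| < `|a 0%N| ->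
  (rho.-1)%:R * magn 1 < magn 0.
Proof. by move=> rho_gt1; rewrite /magn !ifT //; lia. Qed.

(* All b_s with s < rho are positive: b_0 dominates, b_s >= b_(rho-1) > 0. *)
Lemma magn_pos : (1 < rho)%N -> (rho.-1)%:R * `|a 1%N| < `|a 0%N| ->
  (forall j, (1 <= j)%N -> (j.+1 < rho)%N -> `|a j.+1| <= `|a j|) ->
  0 < `|a rho.-1| -> forall s, (s < rho)%N -> 0 < magn s.
Proof.
move=> rho_gt1 a0_dom a_dec a_last [|s] hs.
  by apply: le_lt_trans (magn_dom rho_gt1 a0_dom); rewrite mulr_ge0 ?magn_ge0.
apply: lt_le_trans (magn_mono a_dec (i := s.+1) (j := rho.-1) _ _); [|by []|lia].
by rewrite /magn ifT //; lia.
Qed.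

End Magnitudes.

Section DominantTerm.

Variables (C : numClosedFieldType) (d rho : nat) (w : C).
Variables (x : 'I_d -> C) (b : nat -> C).
Hypothesis w_norm : `|w| = 1.
Hypothesis rho_small : (rho.*2 < d)%N.
Hypothesis x_norm : forall k : 'I_d, `|x k| = b k.
Hypothesis b_ge0 : forall n, 0 <= b n.
Hypothesis b_supp : forall n, (rho <= n)%N -> b n = 0.
Hypothesis b_mono : forall i j, (1 <= i)%N -> (i <= j)%N -> b j <= b i.
Hypothesis b_pos : forall s, (s < rho)%N -> 0 < b s.
Hypothesis b_dom : (rho.-1)%:R * b 1 < b 0.

Lemma b1_le_b0 : b 1 <= b 0.
Proof.
case: (ltnP 1 rho) => hrho; last by rewrite b_supp ?b_ge0.
apply: le_trans (ltW b_dom); apply: ler_peMl; first exact: b_ge0.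
by rewrite (ler_nat C 1); lia.
Qed.

Lemma b_shift_le k s : (1 <= k)%N -> b (k + s) <= b s.
Proof.
case: s => [|s] hk; last by apply: b_mono; lia.
by rewrite addn0; apply: le_trans (b_mono _ hk) b1_le_b0.
Qed.

Let autocorr_term (p : int) (q k : 'I_d) : C :=
  w ^+ (q * k) * (x k * (x (idx_add k p))^*).

Lemma autocorrE (p : int) (q : 'I_d) :
  dft w (hadamard x (shift p (vconj x))) q = \sum_k autocorr_term p q k.
Proof. by []. Qed.

Lemma autocorr_term_norm (p : int) (q k : 'I_d) :
  `|autocorr_term p q k| = b k * b (idx_add k p).
Proof. by rewrite !normrM normrX w_norm expr1n mul1r norm_conjC !x_norm. Qed.

Lemma autocorr_term_supp (p : int) (q k : 'I_d) :
  (rho <= k)%N -> `|autocorr_term p q k| = 0.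
Proof. by move=> hk; rewrite autocorr_term_norm b_supp ?mul0r. Qed.

(* Shift p = s >= 0: the term k = 0 dominates. *)
Lemma autocorr_pos_shift (s : nat) (q : 'I_d) : (s < rho)%N ->
  0 < `|dft w (hadamard x (shift (Posz s) (vconj x))) q|.
Proof.
move=> hs; have d_gt0 : (0 < d)%N by lia.
rewrite autocorrE; apply: (sum_gt0_dominant_support (rho := rho)
  (K := b 1 * b s) (k0 := Ordinal d_gt0)) => //; try by rewrite /=; lia.
- exact: autocorr_term_supp.
- move=> k hk0 hk; rewrite autocorr_term_norm idx_add_Posz; last by lia.
  have hk1 : (1 <= k)%N.
    by rewrite lt0n; apply: contra hk0 => /eqP h; apply/eqP/val_inj.
  by apply: ler_pM; [exact: b_ge0 | exact: b_ge0 | exact: b_mono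
                   | exact: b_shift_le].
- rewrite autocorr_term_norm idx_add_Posz /=; last by lia.
  by rewrite mulrA ltr_pM2r ?b_dom ?b_pos.
Qed.

(* Shift p = -(n+1): the term k = n+1 dominates. *)
Lemma autocorr_neg_shift (n : nat) (q : 'I_d) : (n.+1 < rho)%N ->
  0 < `|dft w (hadamard x (shift (Negz n) (vconj x))) q|.
Proof.
move=> hn; have hnd : (n.+1 < d)%N by lia.
rewrite autocorrE; apply: (sum_gt0_dominant_support (rho := rho)
  (K := b n.+1 * b 1) (k0 := Ordinal hnd)) => //; try by rewrite /=; lia.
- exact: autocorr_term_supp.
- move=> k hk0 hk; rewrite autocorr_term_norm idx_add_Negz; last by lia.
  have hkn : nat_of_ord k <> n.+1 by move=> e; move/eqP: hk0; apply; apply: val_inj.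
  case: ltnP => hnk.
    by apply: ler_pM; rewrite ?b_ge0 ?b_mono //; lia.
  by rewrite [b (k + _)]b_supp ?mulr0 ?mulr_ge0 ?b_ge0 //; lia.
- rewrite autocorr_term_norm idx_add_Negz /= ?ltnSn ?subnn; last by lia.
  by rewrite mulrCA ltr_pM2l ?b_dom ?b_pos.
Qed.

Lemma autocorr_gt0 (p : int) (q : 'I_d) : (absz p < rho)%N ->
  0 < `|dft w (hadamard x (shift p (vconj x))) q|.
Proof.
by case: p => [s|n] /= hp; [exact: autocorr_pos_shift | exact: autocorr_neg_shift].
Qed.

End DominantTerm.

Theorem mainTheorem8 (C : numClosedFieldType) (d : nat) (w : C)
    (hw : d.-primitive_root w)
    (m : 'I_d -> C) (rho kappa : nat) (a u : nat -> C)
    (hrho : (rho.*2 < d)%N)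
    (hsupp : forall j : 'I_d, (rho <= j)%N -> dft w m j = 0)
    (ha_real : forall j, (j < rho)%N -> a j \is Num.real)
    (hu : forall j, (j < rho)%N -> `|u j| = 1)
    (hmhat : forall j : 'I_d, (j < rho)%N -> dft w m j = a j * u j)
    (hkappa : (2 <= kappa <= rho)%N)
    (ha0 : `|a 0%N| > (rho.-1)%:R * `|a 1%N|)
    (hdec : forall j, (1 <= j)%N -> (j.+1 < rho)%N -> `|a j.+1| <= `|a j|)
    (hlast : `|a rho.-1| > 0) :
  forall (p : int) (q : 'I_d), (absz p <= kappa.-1)%N ->
    0 < `| dft w (hadamard (dft w m) (shift p (vconj (dft w m)))) q |.
Proof.
move=> p q hp; have rho_gt1 : (1 < rho)%N by lia.
have x_norm (k : 'I_d) : `|dft w m k| = magn rho a k.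
  rewrite /magn; case: ltnP => hk; last by rewrite hsupp ?normr0.
  by rewrite hmhat // normrM hu // mulr1.
have w_norm : `|w| = 1 by apply: prim_root_norm1 hw; lia.
apply: (autocorr_gt0 w_norm hrho x_norm); last by lia.
- exact: magn_ge0.
- exact: magn_supp.
- exact: magn_mono.
- exact: magn_pos.
- exact: magn_dom.
Qed.
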